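(* Let $H$ be a Hopf algebra over a field $\mathbb{k}$ containing a subalgebra $P$ which is either a polynomial algebra $\mathbb{k}[x]$ or a Laurent polynomial algebra $\mathbb{k}[x^{\pm1}]$ in some element $x$, such that $H$ is finitely generated as a right $P$-module. Then a left ideal $I$ of $H$ has finite codimension in $H$ if and only if $I\cap P\ne0$. *)

From mathcomp Require Import all_boot all_order all_algebra.
Set Implicit Arguments. Unset Strict Implicit. Unset Printing Implicit Defensive.
Import Order.TTheory GRing.Theory Num.Theory.
Local Open Scope ring_scope.

Section Hopf.
Variables (k : fieldType) (H : algType k).

Definition lin_fun (f : H -> k) : Prop :=
  forall (a : k) (u v : H), f (a *: u + v) = a * f u + f v.
Definition lin_endo (f : H -> H) : Prop :=
  forall (a : k) (u v : H), f (a *: u + v) = a *: f u + f v.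

(* Elements of H (x) H are represented by finite sums sum_i a_i (x) b_i,
   i.e. by sequences of pairs.  Two representations denote the same tensor
   iff they agree under every f (x) g with f, g linear functionals (over a
   field, H (x) H embeds into the bilinear forms on pairs of functionals). *)
Definition tpair (f g : H -> k) (s : seq (H * H)) : k :=
  \sum_(p <- s) f p.1 * g p.2.
Definition teq (s t : seq (H * H)) : Prop :=
  forall f g, lin_fun f -> lin_fun g -> tpair f g s = tpair f g t.

Record is_hopf (Delta : H -> seq (H * H)) (eps : H -> k) (S : H -> H) : Prop := {
  hopf_Delta_lin : forall (a : k) (u v : H),
    teq (Delta (a *: u + v)) ([seq (a *: p.1, p.2) | p <- Delta u] ++ Delta v);
  hopf_Delta_mul : forall u v : H,
    teq (Delta (u * v)) [seq (p.1 * q.1, p.2 * q.2) | p <- Delta u, q <- Delta v];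
  hopf_Delta_one : teq (Delta 1) [:: (1, 1)];
  (* coassociativity (Delta (x) id) Delta = (id (x) Delta) Delta, tested on
     f (x) g (x) l for all linear functionals *)
  hopf_coassoc : forall (h : H) (f g l : H -> k),
    lin_fun f -> lin_fun g -> lin_fun l ->
    \sum_(p <- Delta h) tpair f g (Delta p.1) * l p.2
    = \sum_(p <- Delta h) f p.1 * tpair g l (Delta p.2);
  hopf_eps_lin : lin_fun eps;
  hopf_eps_mul : forall u v : H, eps (u * v) = eps u * eps v;
  hopf_eps_one : eps 1 = 1;
  hopf_counitl : forall h : H, \sum_(p <- Delta h) eps p.1 *: p.2 = h;
  hopf_counitr : forall h : H, \sum_(p <- Delta h) eps p.2 *: p.1 = h;
  hopf_S_lin : lin_endo S;
  hopf_antipodel : forall h : H, \sum_(p <- Delta h) S p.1 * p.2 = (eps h)%:A;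
  hopf_antipoder : forall h : H, \sum_(p <- Delta h) p.1 * S p.2 = (eps h)%:A
}.

Definition transcendental (x : H) : Prop :=
  forall p : {poly k}, horner_alg x p = 0 -> p = 0.

Definition is_poly_subalg (P : H -> Prop) (x : H) : Prop :=
  transcendental x /\ forall h, P h <-> exists p : {poly k}, h = horner_alg x p.

(* P is the Laurent polynomial subalgebra k[x, x^-1] (x invertible with
   inverse y, and k[t,t^-1] -> H injective, i.e. x transcendental) *)
Definition is_laurent_subalg (P : H -> Prop) (x : H) : Prop :=
  exists y : H, x * y = 1 /\ y * x = 1 /\ transcendental x /\
    forall h, P h <-> exists (p : {poly k}) (n : nat), h = horner_alg x p * y ^+ n.

Definition fg_right_module (P : H -> Prop) : Prop :=
  exists (n : nat) (g : 'I_n -> H), forall h : H,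
    exists c : 'I_n -> H, (forall i, P (c i)) /\ h = \sum_(i < n) g i * c i.

Definition left_ideal (I : H -> Prop) : Prop :=
  [/\ I 0, (forall u v, I u -> I v -> I (u + v)) & (forall h u, I u -> I (h * u))].

Definition finite_codim (I : H -> Prop) : Prop :=
  exists (m : nat) (v : 'I_m -> H), forall h : H,
    exists c : 'I_m -> k, I (h - \sum_(i < m) c i *: v i).

End Hopf.

From mathcomp Require Import all_boot all_order all_algebra.
Import Order.TTheory GRing.Theory Num.Theory.
Local Open Scope ring_scope.
Set Implicit Arguments. Unset Strict Implicit. Unset Printing Implicit Defensive.

(* If H/I is finite dimensional, the powers of x are linearly dependent modulo
   I, which yields a nonzero polynomial f with f(x) in I.  Conversely, let
   f(x) in I with f <> 0.  In the Laurent case, multiplying by powers of x and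
   x^-1 we may assume f(0) <> 0, and then x^-1 is a polynomial in x modulo the
   left ideal H f(x).  So every element of P is, modulo H f(x) (contained in I),
   a polynomial in x of degree < deg f, and H = sum_i g_i P is spanned modulo I
   by the finitely many g_i x^j with j < deg f. *)

Lemma wide_mx_kernel (F : fieldType) m n (A : 'M[F]_(m, n)) :
  (n < m)%N -> exists2 v : 'rV_m, v != 0 & v *m A = 0.
Proof.
move=> ltnm; have : kermx A != 0.
  rewrite kermx_eq0; apply: contraTN ltnm => /eqP rankA.
  by rewrite -leqNgt -rankA rank_leq_col.
by case/rowV0Pn => v /sub_kermxP vA v0; exists v.
Qed.

Section Horner.
Variables (k : fieldType) (H : algType k).

Lemma horner_alg_sum_coef (x : H) (p : {poly k}) n : (size p <= n)%N ->
  horner_alg x p = \sum_(i < n) p`_i *: x ^+ i.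
Proof.
move=> sp; have {1}-> : p = \poly_(i < n) p`_i.
  apply/polyP => i; rewrite coef_poly; case: ltnP => // le_n_i.
  by rewrite nth_default // (leq_trans sp le_n_i).
rewrite poly_def linear_sum; apply: eq_bigr => i _.
by rewrite linearZ /= rmorphXn /= horner_algX mulr_algl.
Qed.

Lemma commr_horner_alg (a b : H) (p : {poly k}) :
  GRing.comm a b -> GRing.comm a (horner_alg b p).
Proof.
move=> ab; elim/poly_ind: p => [|p c IHp]; first by rewrite rmorph0; apply: commr0.
rewrite rmorphD rmorphM /= horner_algX horner_algC.
by apply: commrD; [apply: commrM | apply/commr_sym/comm_alg].
Qed.

End Horner.

Section LeftIdeal.
Variables (k : fieldType) (H : algType k) (I : H -> Prop).
Hypothesis hI : left_ideal I.

Lemma left_idealD u v : I u -> I v -> I (u + v).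
Proof. by case: hI => _ + _; apply. Qed.

Lemma left_idealMl a u : I u -> I (a * u).
Proof. by case: hI => _ _; apply. Qed.

Lemma left_idealZ (c : k) u : I u -> I (c *: u).
Proof. by rewrite -mulr_algl; apply: left_idealMl. Qed.

Lemma left_ideal_sum (T : Type) (r : seq T) (F : T -> H) :
  (forall i, I (F i)) -> I (\sum_(i <- r) F i).
Proof. by case: hI => I0 _ _ IF; apply: big_ind => //; apply: left_idealD. Qed.

Lemma left_ideal_cancelr a b u : GRing.comm b u -> b * a = 1 -> I (u * a) -> I u.
Proof. by move=> bu ba /(left_idealMl b); rewrite mulrA bu -mulrA ba mulr1. Qed.

Lemma finite_codim_fin (T : finType) (v : T -> H) :
  (forall h, exists c : T -> k, I (h - \sum_t c t *: v t)) -> finite_codim I.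
Proof.
move=> Iv; exists #|T|, (v \o enum_val) => h.
have [c Ic] := Iv h; exists (c \o enum_val).
by rewrite /= -(big_enum_val (A := T) (fun t => c t *: v t)).
Qed.

Lemma finite_codim_exists_poly (x : H) :
  finite_codim I -> exists2 q : {poly k}, q != 0 & I (horner_alg x q).
Proof.
case=> m [v Iv].
have /fin_all_exists [C IC] : forall j : 'I_m.+1,
    exists c : 'I_m -> k, I (x ^+ j - \sum_i c i *: v i) by move=> j; apply: Iv.
have [lam lam0 lamC] := wide_mx_kernel (\matrix_(j, i) C j i) (ltnSn m).
exists (rVpoly lam).
  apply: contraNneq lam0 => /(congr1 (@poly_rV _ m.+1)).
  by rewrite rVpolyK linear0 => ->.
have lamCv : \sum_j lam 0 j *: \sum_i C j i *: v i = 0.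
  under eq_bigr do rewrite scaler_sumr.
  rewrite exchange_big big1 // => i _.
  under eq_bigr do rewrite scalerA.
  rewrite -scaler_suml.
  suff -> : \sum_j lam 0 j * C j i = (lam *m \matrix_(j, i) C j i) 0 i.
    by rewrite lamC mxE scale0r.
  by rewrite mxE; apply: eq_bigr => j _; rewrite mxE.
have -> : horner_alg x (rVpoly lam)
    = \sum_j lam 0 j *: (x ^+ j - \sum_i C j i *: v i).
  under [RHS]eq_bigr do rewrite scalerBr.
  rewrite sumrB lamCv subr0 (horner_alg_sum_coef x (size_poly _ _)).
  by apply: eq_bigr => j _; rewrite coef_rVpoly_ord.
by apply: left_ideal_sum => j; apply: left_idealZ.
Qed.

End LeftIdeal.

Section PolyModulo.
Variables (k : fieldType) (H : algType k) (x : H).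

Definition poly_mod (f : {poly k}) (c : H) : Prop :=
  exists (r : {poly k}) (a : H), c = horner_alg x r + a * horner_alg x f.

Lemma poly_mod_horner f r : poly_mod f (horner_alg x r).
Proof. by exists r, 0; rewrite mul0r addr0. Qed.

Lemma poly_mod_small f c : f != 0 -> poly_mod f c ->
  exists (r : {poly k}) (a : H),
    (size r < size f)%N /\ c = horner_alg x r + a * horner_alg x f.
Proof.
move=> f0 [r [a ->]]; exists (r %% f), (horner_alg x (r %/ f) + a).
split; first exact: ltn_modpN0.
by rewrite {1}(divp_eq r f) !rmorphD rmorphM /= mulrDl addrCA addrA.
Qed.

Lemma finite_codim_fg_poly_mod (I : H -> Prop) (Q : H -> Prop) (f : {poly k}) :
  left_ideal I -> f != 0 -> I (horner_alg x f) ->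
  (forall c, Q c -> poly_mod f c) -> fg_right_module Q -> finite_codim I.
Proof.
move=> hI f0 If Qmod [n [g gQ]].
pose v (p : 'I_n * 'I_(size f)) := g p.1 * x ^+ p.2.
apply: (finite_codim_fin (v := v)) => h.
have [c [Qc ->]] := gQ h.
have /fin_all_exists [ra ra_small] : forall i, exists ra : {poly k} * H,
    (size ra.1 < size f)%N /\ c i = horner_alg x ra.1 + ra.2 * horner_alg x f.
  by move=> i; have [r [a]] := poly_mod_small f0 (Qmod _ (Qc i)); exists (r, a).
exists (fun p : 'I_n * 'I_(size f) => (ra p.1).1`_p.2).
have -> : \sum_(p : 'I_n * 'I_(size f)) (ra p.1).1`_p.2 *: v p
    = \sum_i g i * horner_alg x (ra i).1.
  rewrite -(pair_bigA _ (fun i (j : 'I_(size f)) => (ra i).1`_j *: (g i * x ^+ j))).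
  apply: eq_bigr => i _ /=.
  rewrite (horner_alg_sum_coef x (ltnW (ra_small i).1)) mulr_sumr.
  by apply: eq_bigr => j _; rewrite scalerAr.
rewrite -sumrB; apply: (left_ideal_sum hI) => i.
by rewrite (ra_small i).2 mulrDr addrC addKr mulrA; apply: left_idealMl.
Qed.

End PolyModulo.

Section Laurent.
Variables (k : fieldType) (H : algType k) (x y : H).
Hypotheses (xy1 : x * y = 1) (yx1 : y * x = 1).

Let comm_xy : GRing.comm x y.
Proof. by rewrite /GRing.comm xy1 yx1. Qed.

Let comm_y_horner (p : {poly k}) : GRing.comm y (horner_alg x p).
Proof. exact/commr_horner_alg/commr_sym. Qed.

Lemma poly_mod_inv f : ~~ root f 0 -> poly_mod x f y.
Proof.
elim/poly_ind: f => [|t c _]; first by rewrite root0.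
rewrite /root hornerMXaddC mulr0 add0r => c0.
(* from f = t X + c: c y = y f(x) - t(x) *)
exists (- (c^-1 *: t)), (c^-1 *: y).
rewrite rmorphD rmorphM /= horner_algX horner_algC rmorphN /= -mul_polyC.
rewrite rmorphM /= horner_algC mulr_algl.
rewrite -scalerAl mulrDr mulrA comm_y_horner -mulrA yx1 mulr1 mulr_algr.
by rewrite scalerDr scalerA mulVf // scale1r addKr.
Qed.

Lemma poly_mod_mulr_inv f c : ~~ root f 0 -> poly_mod x f c -> poly_mod x f (c * y).
Proof.
move=> f0 [r [a ->]]; have [u [w Ey]] := poly_mod_inv f0.
exists (r * u), (horner_alg x r * w + a * y).
rewrite mulrDl -mulrA -(comm_y_horner f) mulrA {1}Ey mulrDr rmorphM /=.
by rewrite mulrDl mulrA addrA.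
Qed.

Lemma poly_mod_laurent f r n : ~~ root f 0 -> poly_mod x f (horner_alg x r * y ^+ n).
Proof.
move=> f0; elim: n => [|n IHn]; first by rewrite mulr1; apply: poly_mod_horner.
by rewrite exprSr mulrA; apply: poly_mod_mulr_inv.
Qed.

Lemma left_ideal_poly_nonroot0 (I : H -> Prop) (q : {poly k}) n :
  left_ideal I -> q != 0 -> I (horner_alg x q * y ^+ n) ->
  exists2 f : {poly k}, ~~ root f 0 & I (horner_alg x f).
Proof.
move=> hI q0 Iq; have [m [f f0 Eq]] := multiplicity_XsubC q 0.
exists f; first exact: implyP f0 q0.
apply: (left_ideal_cancelr hI (a := x ^+ m) (b := y ^+ m)).
- exact/commr_sym/commrX/commr_sym/comm_y_horner.
- by rewrite -exprMn_comm ?yx1 ?expr1n //; apply: commr_sym.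
have -> : horner_alg x f * x ^+ m = horner_alg x q.
  by rewrite Eq polyC0 subr0 rmorphM rmorphXn /= horner_algX.
apply: (left_ideal_cancelr hI (a := y ^+ n) (b := x ^+ n)) => //.
- exact/commr_sym/commrX/commr_sym/commr_horner_alg/commr_refl.
- by rewrite -exprMn_comm ?xy1 ?expr1n.
Qed.

End Laurent.

Theorem lemma2p7 (k : fieldType) (H : algType k)
  (Delta : H -> seq (H * H)) (eps : H -> k) (S : H -> H)
  (hopf : is_hopf Delta eps S)
  (P : H -> Prop) (x : H)
  (hP : is_poly_subalg P x \/ is_laurent_subalg P x)
  (hfg : fg_right_module P)
  (I : H -> Prop) (hI : left_ideal I) :
  finite_codim I <-> exists h : H, I h /\ P h /\ h != 0.
Proof.
have [x_tr P_horner] : transcendental x /\ forall q, P (horner_alg x q).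
  case: hP => [[x_tr hPx] | [y [_ [_ [x_tr hPx]]]]]; split=> // q; apply/hPx.
    by exists q.
  by exists q, 0%N; rewrite mulr1.
split=> [codim | [h [Ih [Ph h0]]]].
  have [q q0 Iq] := finite_codim_exists_poly hI x codim.
  exists (horner_alg x q); split=> //; split; first exact: P_horner.
  by apply: contraNneq q0 => /x_tr ->.
case: hP => [[_ hPx] | [y [xy1 [yx1 [_ hPx]]]]].
  have [q Eh] := (hPx h).1 Ph.
  have q0 : q != 0 by apply: contraNneq h0 => q0; rewrite Eh q0 rmorph0.
  rewrite Eh in Ih; apply: (finite_codim_fg_poly_mod hI q0 Ih _ hfg).
  by move=> c /hPx [r ->]; apply: poly_mod_horner.
have [q [n Eh]] := (hPx h).1 Ph.
have q0 : q != 0 by apply: contraNneq h0 => q0; rewrite Eh q0 rmorph0 mul0r.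
rewrite Eh in Ih; have [f f_0 If] := left_ideal_poly_nonroot0 xy1 yx1 hI q0 Ih.
have f0 : f != 0 by apply: contraNneq f_0 => ->; rewrite root0.
apply: (finite_codim_fg_poly_mod hI f0 If _ hfg).
by move=> c /hPx [r [m ->]]; apply: poly_mod_laurent.
Qed.
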